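(* For every hypothesis class $\mathcal{F}\subseteq\mathcal{Y}^{\mathcal{X}}$ (with $\mathcal{Y}$ finite), $\mathrm{DFFdim}(\mathrm{OtD}(\mathcal{F}))\geq\mathrm{Ldim}(\mathcal{F})$.
   Context: Setting. A teacher over $\mathcal{X},\mathcal{Y},\Phi$ ($\Phi$ a set of Boolean features on $\mathcal{X}$, $\bot$ a null symbol) is a pair $T=(\ell,\psi)$ with $\ell:\mathcal{X}\to\mathcal{Y}$ and $\psi:\mathcal{X}\times\mathcal{X}\to\Phi\cup\{\bot\}$ such that whenever $\ell(x)\neq\ell(\hat x)$, $\phi:=\psi(x,\hat x)\in\Phi$, $\phi(x)=1$ and $\phi(\hat x)=0$. A teacher class is a set of teachers. A history is a non-empty set $H\subseteq\mathcal{X}\times\mathcal{Y}$, $H_{\mathcal{X}}=\{x:\exists y,(x,y)\in H\}$; a teacher $(\ell,\psi)$ is consistent with $H$ if $\ell(x)=y$ for all $(x,y)\in H$; $\mathcal{T}_H$ is the set of teachers in $\mathcal{T}$ consistent with $H$. DFF dimension. A DFF tree is a rooted tree whose nodes are triples $\langle y,\phi,x\rangle$ with $y\in\mathcal{Y}\cup\{\bot\}$, $\phi\in\Phi\cup\{\bot\}$, $x\in\mathcal{X}\cup\{\bot\}$, such that the root has $y=\phi=\bot$, a node has $x=\bot$ iff it is a leaf, every edge is labeled by a pair $(\hat x,\hat y)\in\mathcal{X}\times\mathcal{Y}$, and every non-root node $\langle y,\phi,x\rangle$ with incoming edge $(\hat x,\hat y)$ has $\phi\neq\bot$ whenever $y\neq\hat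 y$. For a parent–child pair $\langle\cdot,\cdot,x\rangle\xrightarrow{(\hat x,\hat y)}\langle y,\phi,\cdot\rangle$ on a path, $(x,y)$ is called a labeled example in that path. A path from the root is consistent with a teacher $(\ell,\psi)$ if for every such parent–child pair on it, $\ell(x)=y$ and, if $y\neq\hat y$, $\psi(x,\hat x)=\phi$. Given $\mathcal{T}$ consistent with $H$, a DFF tree is shattered by $\mathcal{T}$ and $H$ if: (1) every non-root node $\langle y,\phi,x\rangle$ with incoming edge $(\hat x,\hat y)$ has $y\neq\hat y$; (2) the labels of the outgoing edges of each non-leaf node $v$ are exactly the pairs that belong to $H$ or are labeled examples in the path from the root to $v$; (3) every root-to-leaf path is consistent with some teacher in $\mathcal{T}_H$; (4) all root-to-leaf paths have the same number of edges, called the height. $\mathrm{DFFdim}(\mathcal{T},H)$ is the maximal height of a DFF tree shattered by $\mathcal{T}$ and $H$. $\mathrm{Ldim}$ is the (multiclass) Littlestone dimension: the maximal depth of a complete binary tree whose internal nodes are labeled by examples and whose two outgoing edges at each internal node are labeled by two distinct labels, such that for every root-to-leaf path some $f\in\mathcal{F}$ agrees with all (example, edge label) pairs on the path. Mapping OtD: given $\mathcal{F}\subseteq\mathcal{Y}^{\mathcal{X}}$, for each $y\in\mathcal{Y}$ let $\star_y\notin\mathcal{X}$ be a new distinct point, $H=\{(\star_y,y):y\in\mathcal{Y}\}$, $\mathcal{X}'=\mathcal{X}\cup H_{\mathcal{X}}$, and $\Phi=\{\mathbb{I}[x]:x\in\mathcal{X}'\}$ where $\mathbb{I}[x](x')=1$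 iff $x'=x$. For $f\in\mathcal{F}$ let $f':\mathcal{X}'\to\mathcal{Y}$ extend $f$ by $f'(\star_y)=y$, let $\psi_f(x,x')=\mathbb{I}[x]$, and $T_f=(f',\psi_f)$. Then $\mathrm{OtD}(\mathcal{F})=(\mathcal{T}_{\mathcal{F}},H)$ with $\mathcal{T}_{\mathcal{F}}=\{T_f:f\in\mathcal{F}\}$ (a teacher class over $\mathcal{X}',\mathcal{Y},\Phi$). *)

From mathcomp Require Import all_boot.
From Stdlib Require Lists.List.
Set Implicit Arguments.
Unset Strict Implicit.
Unset Printing Implicit Defensive.

Definition is_teacher (X Y Phi : Type) (ev : Phi -> X -> bool)
  (l : X -> Y) (psi : X -> X -> option Phi) : Prop :=
  forall x xh, l x <> l xh ->
    exists phi, psi x xh = Some phi /\ ev phi x = true /\ ev phi xh = false.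

Definition teacher_consistent_H (X Y : Type) (l : X -> Y) (H : list (X * Y)) : Prop :=
  forall x y, List.In (x, y) H -> l x = y.

(* DFF trees.  A node is <y, phi, x> (None = bottom) together with the *)
(* list of its outgoing edges, each labelled by a pair (xh, yh).       *)
Inductive dtree (X Y Phi : Type) : Type :=
  DNode : option Y -> option Phi -> option X ->
          list ((X * Y) * dtree X Y Phi) -> dtree X Y Phi.

Definition dy X Y Phi (t : dtree X Y Phi) : option Y :=
  let: DNode y _ _ _ := t in y.
Definition dphi X Y Phi (t : dtree X Y Phi) : option Phi :=
  let: DNode _ phi _ _ := t in phi.

Definition new_ex X Y (px : X) (oy : option Y) : list (X * Y) :=
  match oy with Some y => [:: (px, y)] | None => [::] end.

(* Structural well-formedness of a DFF tree below a node, together with the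
   shattering conditions (1) and (2).  [ex] is the list of labeled examples
   on the path from the root to the current node. *)
Inductive dff_ok (X Y Phi : Type) (H : list (X * Y))
  : list (X * Y) -> dtree X Y Phi -> Prop :=
| dff_ok_node ex y phi ox ch :
    (ox = None <-> ch = nil) ->
    (forall px, ox = Some px ->
       List.NoDup (map fst ch) /\
       (forall p, List.In p (map fst ch) <-> (List.In p H \/ List.In p ex)) /\
       (forall lab c, List.In (lab, c) ch ->
          (dy c <> Some lab.2 -> dphi c <> None) /\
          dy c <> Some lab.2 /\
          dff_ok H (ex ++ new_ex px (dy c)) c)) ->
    dff_ok H ex (DNode y phi ox ch).

(* Root-to-leaf paths: list of steps (parent x, edge label, child y, child phi). *)
Inductive dpath (X Y Phi : Type)
  : dtree X Y Phi -> list (X * (X * Y) * option Y * option Phi) -> Prop :=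
| dpath_leaf y phi ox : dpath (DNode y phi ox nil) nil
| dpath_step y phi px ch lab c p :
    List.In (lab, c) ch -> dpath c p ->
    dpath (DNode y phi (Some px) ch) ((px, lab, dy c, dphi c) :: p).

Definition path_consistent (X Y Phi : Type) (l : X -> Y)
  (psi : X -> X -> option Phi) (p : list (X * (X * Y) * option Y * option Phi)) : Prop :=
  forall px lab yc phic, List.In (px, lab, yc, phic) p ->
    yc = Some (l px) /\ (yc <> Some lab.2 -> psi px lab.1 = phic).

Definition dff_shattered (X Y Phi : Type)
  (TC : (X -> Y) -> (X -> X -> option Phi) -> Prop) (H : list (X * Y))
  (t : dtree X Y Phi) (h : nat) : Prop :=
  dy t = None /\ dphi t = None /\ dff_ok H nil t /\
  (forall p, dpath t p ->
     exists l psi, TC l psi /\ teacher_consistent_H l H /\ path_consistent l psi p) /\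
  (forall p, dpath t p -> size p = h).

Definition DFFdim_ge (X Y Phi : Type)
  (TC : (X -> Y) -> (X -> X -> option Phi) -> Prop) (H : list (X * Y)) (n : nat) : Prop :=
  exists t h, n <= h /\ dff_shattered TC H t h.

Inductive ltree (X Y : Type) : Type :=
| LLeaf : ltree X Y
| LNode : X -> Y -> Y -> ltree X Y -> ltree X Y -> ltree X Y.

Fixpoint lcomplete X Y (t : ltree X Y) (n : nat) : Prop :=
  match t, n with
  | LLeaf, 0 => True
  | LNode _ y0 y1 l r, S m => y0 <> y1 /\ lcomplete l m /\ lcomplete r m
  | _, _ => False
  end.

Fixpoint lpaths X Y (t : ltree X Y) : list (list (X * Y)) :=
  match t with
  | LLeaf => [:: [::]]
  | LNode x y0 y1 l r =>
      map (cons (x, y0)) (lpaths l) ++ map (cons (x, y1)) (lpaths r)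
  end.

Definition Ldim_ge (X Y : Type) (F : (X -> Y) -> Prop) (n : nat) : Prop :=
  exists t : ltree X Y, lcomplete t n /\
    forall p, List.In p (lpaths t) ->
      exists f, F f /\ forall x y, List.In (x, y) p -> f x = y.

(* The OtD mapping.  X' = X + Y (inr y is the new point star_y);       *)
(* features Phi = {I[x'] : x' in X'} are indexed by X' itself.          *)
Definition indicator (X Y : Type) (phi : X + Y) (z : X + Y) : Prop := z = phi.

Definition OtD_ext (X Y : Type) (f : X -> Y) : X + Y -> Y :=
  fun z => match z with inl x => f x | inr y => y end.

Definition OtD_psi (X Y : Type) : X + Y -> X + Y -> option (X + Y) :=
  fun x _ => Some x.

Definition OtD_class (X Y : Type) (F : (X -> Y) -> Prop)
  (l : X + Y -> Y) (psi : X + Y -> X + Y -> option (X + Y)) : Prop :=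
  exists f, F f /\ l = OtD_ext f /\ psi = @OtD_psi X Y.

Definition OtD_H (X : Type) (Y : finType) : list ((X + Y) * Y) :=
  [seq (inr y, y) | y <- enum Y].

From mathcomp Require Import all_boot.
From Stdlib Require Import Classical.
From Stdlib Require List.

Set Implicit Arguments.
Unset Strict Implicit.
Unset Printing Implicit Defensive.

(* Every Littlestone tree of depth n for F is turned into a DFF tree of the
   same height shattered by OtD(F).  A node x with branch labels y0 <> y1
   becomes a node querying the point x; along each outgoing edge (xh, yh),
   whatever the learner's guess yh is, one of y0, y1 differs from it, and the
   child answers with that label and the feature I[x], then continues with
   the corresponding Littlestone subtree.  Since the child label always
   differs from the guess, condition (1) holds, and a hypothesis realizing the
   Littlestone path realizes the DFF path through OtD. *)

Lemma exists_NoDup_same_elements (A : Type) (s : list A) :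
  exists s', List.NoDup s' /\ forall a, List.In a s' <-> List.In a s.
Proof.
elim: s => [|a s [s' [s'_uniq s'_eq]]].
  by exists nil; split; [constructor | move=> a; split].
have [a_in | a_notin] := classic (List.In a s').
  exists s'; split => // b; split; first by move=> /s'_eq; right.
  by case=> [<- | /s'_eq].
exists (a :: s'); split; first by constructor.
by move=> b; split; case=> [-> | /s'_eq b_in]; by [left | right].
Qed.

Lemma exists_graph_on (A B : Type) (P : A -> B -> Prop) (keys : list A) :
  (forall a, exists b, P a b) ->
  exists g : list (A * B), map fst g = keys /\ forall a b, List.In (a, b) g -> P a b.
Proof.
move=> P_total; elim: keys => [|a keys [g [g_keys g_P]]]; first by exists nil.
have [b Pab] := P_total a.
exists ((a, b) :: g); split; first by rewrite /= g_keys.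
by move=> a' b' [[<- <-] | /g_P].
Qed.

Lemma mem_In (T : eqType) (s : seq T) (x : T) : x \in s -> List.In x s.
Proof.
by elim: s => [//|a s IHs]; rewrite inE => /orP [/eqP -> | /IHs]; [left | right].
Qed.

Lemma teacher_consistent_H_cat (A B : Type) (f : A -> B) (s1 s2 : list (A * B)) :
  teacher_consistent_H f (s1 ++ s2) <->
  teacher_consistent_H f s1 /\ teacher_consistent_H f s2.
Proof.
split=> [f_s | [f_s1 f_s2] x y xy_in].
  by split=> x y xy_in; apply: f_s; apply: List.in_or_app; [left | right].
by case: (List.in_app_or _ _ _ xy_in); [apply: f_s1 | apply: f_s2].
Qed.

Lemma path_consistent_cons (A B Phi : Type) (l : A -> B) (psi : A -> A -> option Phi)
    px lab yc phic p :
  yc = Some (l px) -> (yc <> Some lab.2 -> psi px lab.1 = phic) ->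
  path_consistent l psi p -> path_consistent l psi ((px, lab, yc, phic) :: p).
Proof.
by move=> yc_l psi_phi p_cons px' lab' yc' phic' [[<- <- <- <-] | /p_cons].
Qed.

Lemma OtD_H_In (X : Type) (Y : finType) (y : Y) : List.In (inr y, y) (OtD_H X Y).
Proof. by apply: (List.in_map (fun y => (inr y, y))); apply: mem_In; rewrite mem_enum. Qed.

Lemma OtD_ext_consistent_H (X : Type) (Y : finType) (f : X -> Y) :
  teacher_consistent_H (OtD_ext f) (OtD_H X Y).
Proof. by move=> x y /List.in_map_iff [y' [[<- <-] _]]. Qed.

Section Construction.

Variables (X : Type) (Y : finType) (F : (X -> Y) -> Prop).

Definition realizable (pre : list (X * Y)) (t : ltree X Y) : Prop :=
  forall p, List.In p (lpaths t) -> exists f, F f /\ teacher_consistent_H f (pre ++ p).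

Definition otd_realizes (pre : list (X * Y)) (m : nat) (c : dtree (X + Y) Y (X + Y)) :=
  forall p, dpath c p -> size p = m /\ exists f, F f /\
    teacher_consistent_H f pre /\ path_consistent (OtD_ext f) (@OtD_psi X Y) p.

Definition otd_subtree (ex : list ((X + Y) * Y)) (pre : list (X * Y)) (m : nat)
    (yo : option Y) (phio : option (X + Y)) (c : dtree (X + Y) Y (X + Y)) :=
  dy c = yo /\ dphi c = phio /\ dff_ok (OtD_H X Y) ex c /\ otd_realizes pre m c.

Lemma realizable_node pre x y0 y1 l r :
  realizable pre (LNode x y0 y1 l r) ->
  realizable (pre ++ [:: (x, y0)]) l /\ realizable (pre ++ [:: (x, y1)]) r.
Proof.
move=> t_real; split=> p p_in.
- have [f [Ff f_cons]] := t_real _ (List.in_or_app _ _ _ (or_introl (List.in_map _ _ _ p_in))).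
  by exists f; rewrite -catA.
- have [f [Ff f_cons]] := t_real _ (List.in_or_app _ _ _ (or_intror (List.in_map _ _ _ p_in))).
  by exists f; rewrite -catA.
Qed.

Lemma otd_leaf pre ex yo phio :
  realizable pre (@LLeaf X Y) -> otd_subtree ex pre 0 yo phio (DNode yo phio None nil).
Proof.
move=> leaf_real; do 3 split => //.
move=> p p_path; inversion p_path; subst; split => //.
have [f [Ff f_cons]] := leaf_real nil (or_introl erefl).
by exists f; rewrite cats0 in f_cons.
Qed.

Section Node.

Variables (x : X) (y0 y1 : Y) (pre : list (X * Y)) (k : nat).
Hypothesis y0_neq_y1 : y0 <> y1.
Hypothesis subtrees : forall yi, yi = y0 \/ yi = y1 -> forall ex,
  exists c, otd_subtree ex (pre ++ [:: (x, yi)]) k (Some yi) (Some (inl x)) c.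

Definition refuting_child (ex : list ((X + Y) * Y)) (lab : (X + Y) * Y) c :=
  exists yi, yi <> lab.2 /\
    otd_subtree (ex ++ [:: (inl x, yi)]) (pre ++ [:: (x, yi)]) k (Some yi) (Some (inl x)) c.

Lemma exists_refuting_child ex lab : exists c, refuting_child ex lab c.
Proof.
have [yi [yi_neq yi_branch]] : exists yi, yi <> lab.2 /\ (yi = y0 \/ yi = y1).
  have [->|lab_neq] := eqVneq lab.2 y0; first by exists y1; split; [apply: nesym | right].
  by exists y0; split; [apply/eqP; rewrite eq_sym | left].
have [c c_sub] := subtrees yi_branch (ex ++ [:: (inl x, yi)]).
by exists c, yi.
Qed.

Lemma refuting_child_realizes ex lab c p :
  refuting_child ex lab c -> dpath c p ->
  size p = k /\ exists f, F f /\ teacher_consistent_H f pre /\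
    path_consistent (OtD_ext f) (@OtD_psi X Y) ((inl x, lab, dy c, dphi c) :: p).
Proof.
move=> [yi [_ [-> [-> [_ c_real]]]]] /c_real [p_size [f [Ff [f_cons p_cons]]]].
move/teacher_consistent_H_cat: f_cons => [f_pre f_x].
split=> //; exists f; do 2 split => //.
by apply: path_consistent_cons => //=; rewrite (f_x x yi) //; left.
Qed.

Lemma otd_node ex yo phio : exists c, otd_subtree ex pre k.+1 yo phio c.
Proof.
have [labs [labs_uniq labs_eq]] := exists_NoDup_same_elements (OtD_H X Y ++ ex).
have [ch [ch_labs ch_child]] := exists_graph_on labs (exists_refuting_child ex).
have ch_nonempty : ch <> nil.
  move=> ch_nil; have : List.In (inr y0, y0) labs.
    by apply/labs_eq/List.in_or_app; left; apply: OtD_H_In.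
  by rewrite -ch_labs ch_nil.
exists (DNode yo phio (Some (inl x)) ch); do 2 split => //; split.
  constructor=> [|_ [<-]]; first by split.
  rewrite ch_labs; do 2 split => //.
    by move=> lab; rewrite labs_eq; split; [apply: List.in_app_or | apply: List.in_or_app].
  move=> lab c /ch_child [yi [yi_neq [-> [-> [c_ok _]]]]].
  by do 2 split => //; case.
move=> p p_path; inversion p_path as [|? ? ? ? lab c p' c_in c_path]; subst.
  by case: ch_nonempty.
have [p_size f_real] := refuting_child_realizes (ch_child _ _ c_in) c_path.
by rewrite /= p_size.
Qed.

End Node.

Lemma otd_subtree_of_ltree (t : ltree X Y) (m : nat) (pre : list (X * Y)) :
  lcomplete t m -> realizable pre t ->
  forall ex yo phio, exists c, otd_subtree ex pre m yo phio c.
Proof.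
elim: t m pre => [|x y0 y1 l IHl r IHr] [|k] //= pre.
  by move=> _ t_real ex yo phio; exists (DNode yo phio None nil); apply: otd_leaf.
move=> [y0_neq_y1 [l_compl r_compl]] /realizable_node [l_real r_real] ex yo phio.
apply: (otd_node (x := x) y0_neq_y1) => yi [->|->] ex'.
  exact: IHl _ _ l_compl l_real ex' (Some y0) (Some (inl x)).
exact: IHr _ _ r_compl r_real ex' (Some y1) (Some (inl x)).
Qed.

End Construction.

Theorem mainTheorem9 (X : Type) (Y : finType) (F : (X -> Y) -> Prop) (n : nat) :
  Ldim_ge F n -> DFFdim_ge (OtD_class F) (OtD_H X Y) n.
Proof.
move=> [t [t_compl t_real]].
have [c [c_y [c_phi [c_ok c_real]]]] :=
  otd_subtree_of_ltree t_compl (t_real : realizable F nil t) nil None None.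
exists c, n; do 5 split => //; last by move=> p /c_real [].
move=> p /c_real [_ [f [Ff [_ p_cons]]]].
exists (OtD_ext f), (@OtD_psi X Y); split; first by exists f.
by split; [apply: OtD_ext_consistent_H |].
Qed.
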